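(* Let $C_1=\{(x,y)\in\mathbb{Z}^2: x\ge0,\ |y|\le x\}$ and $\alpha>0$. Then the divisible sandpile $s_0=(1+\alpha)\mathbf 1_{C_1}$ on the square lattice $\mathbb{Z}^2$ does not stabilize.
   Context: $\mathbb{Z}^2$ has its nearest-neighbour graph structure, $\Delta u(x)=\sum_{y\sim x}(u(y)-u(x))$. $s$ stabilizes if there exists $f:\mathbb{Z}^2\to[0,\infty)$ with $s+\Delta f\le1$ pointwise. *)

From Stdlib Require Import Reals ZArith.
Open Scope R_scope.

Definition laplacian (u : Z -> Z -> R) (x y : Z) : R :=
  (u (x + 1)%Z y - u x y) + (u (x - 1)%Z y - u x y)
  + (u x (y + 1)%Z - u x y) + (u x (y - 1)%Z - u x y).

Definition stabilizes (s : Z -> Z -> R) : Prop :=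
  exists f : Z -> Z -> R,
    (forall x y, 0 <= f x y) /\
    (forall x y, s x y + laplacian f x y <= 1).

Definition indC1 (x y : Z) : R :=
  if Z_le_dec 0 x then (if Z_le_dec (Z.abs y) x then 1 else 0) else 0.

From Stdlib Require Import Reals ZArith Lia Lra Psatz.
Open Scope R_scope.

(* In the coordinates u = x + y, v = x - y the cone C1 becomes the quadrant u, v >= 0 and the
   lattice Laplacian averages over the four diagonal neighbours, i.e. over one step of a pair of
   independent simple random walks.  Let [walk t] be the law at time t of a simple random walk on
   Z started at 1 and killed at 0, and [mass t] its total mass.  If f stabilizes s0, then f is
   superharmonic with defect alpha on C1, so the energy sum f(u, v) walk_t(u) walk_t(v) drops by
   at least (alpha/4) mass_t^2 per step; being nonnegative, it forces
   sum_t mass_t^2 <= 4 f(1, 0) / alpha.  On the other hand [walk t] keeps first moment 1 while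
   its second moment M_t grows by mass_t, and Cauchy-Schwarz gives mass_t M_t >= 1; hence
   M_t^2 >= 1 + 2t although M_t <= exp (sum_t mass_t^2), a contradiction.  All sums run over a
   window [0, N) containing the supports of walk_0, ..., walk_T. *)

Fixpoint psum (n : nat) (g : nat -> R) : R :=
  match n with O => 0 | S n => psum n g + g n end.

Lemma psum_ext n g h : (forall k, g k = h k) -> psum n g = psum n h.
Proof. intros E; induction n as [|n IH]; cbn; [reflexivity|]. now rewrite IH, E. Qed.

Lemma psum_add n g h : psum n (fun k => g k + h k) = psum n g + psum n h.
Proof. induction n as [|n IH]; cbn; [ring|]. rewrite IH; ring. Qed.

Lemma psum_scal n c g : psum n (fun k => c * g k) = c * psum n g.
Proof. induction n as [|n IH]; cbn; [ring|]. rewrite IH; ring. Qed.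

Lemma psum_le n g h : (forall k, g k <= h k) -> psum n g <= psum n h.
Proof. intros E; induction n as [|n IH]; cbn; [lra|]. specialize (E n); lra. Qed.

Lemma psum_ge0 n g : (forall k, 0 <= g k) -> 0 <= psum n g.
Proof. intros E; induction n as [|n IH]; cbn; [lra|]. specialize (E n); lra. Qed.

Lemma psum_eq0 n g : (forall k, (k < n)%nat -> g k = 0) -> psum n g = 0.
Proof.
  induction n as [|n IH]; intros E; cbn; [reflexivity|].
  rewrite IH, E; [ring|lia|]. intros k Hk; apply E; lia.
Qed.

Lemma psum_single n g p :
  (p < n)%nat -> (forall k, k <> p -> g k = 0) -> psum n g = g p.
Proof.
  induction n as [|n IH]; intros Hp E; cbn; [lia|].
  destruct (Nat.eq_dec n p) as [->|Hne].
  - rewrite psum_eq0; [ring|]. intros k Hk; apply E; lia.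
  - rewrite IH, (E n); [ring|assumption|lia|assumption].
Qed.

Lemma quadratic_discriminant_le a b c :
  0 <= a -> (forall l, 0 <= a * l ^ 2 + b * l + c) -> b ^ 2 <= 4 * a * c.
Proof.
  intros Ha Hq. destruct (Req_dec a 0) as [Ha0|Ha0].
  - subst a. destruct (Req_dec b 0) as [->|Hb]; [lra|].
    specialize (Hq (- (c + 1) / b)).
    replace (b * (- (c + 1) / b)) with (- (c + 1)) in Hq by (field; assumption). lra.
  - specialize (Hq (- b / (2 * a))).
    replace (a * (- b / (2 * a)) ^ 2 + b * (- b / (2 * a)) + c)
      with ((4 * a * c - b ^ 2) / (4 * a)) in Hq by (field; assumption).
    assert (H4a : 0 < 4 * a) by lra.
    apply (Rmult_le_compat_r (4 * a)) in Hq; [|lra].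
    unfold Rdiv in Hq. rewrite Rmult_assoc, Rinv_l in Hq by lra. lra.
Qed.

Lemma psum_cauchy_schwarz n (w x : nat -> R) : (forall k, 0 <= w k) ->
  psum n (fun k => w k * x k) ^ 2 <= psum n w * psum n (fun k => w k * x k ^ 2).
Proof.
  intros Hw.
  enough ((2 * psum n (fun k => w k * x k)) ^ 2
              <= 4 * psum n w * psum n (fun k => w k * x k ^ 2)) by lra.
  apply quadratic_discriminant_le; [now apply psum_ge0|]. intros l.
  assert (E : psum n w * l ^ 2 + 2 * psum n (fun k => w k * x k) * l
              + psum n (fun k => w k * x k ^ 2) = psum n (fun k => w k * (x k + l) ^ 2)).
  { rewrite (psum_ext n (fun k => w k * (x k + l) ^ 2)
      (fun k => l ^ 2 * w k + 2 * l * (w k * x k) + w k * x k ^ 2)) by (intros; ring).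
    rewrite !psum_add, !psum_scal. ring. }
  rewrite E. apply psum_ge0; intros k. apply Rmult_le_pos; [apply Hw|apply pow2_ge_0].
Qed.

Definition sumZ (n : nat) (g : Z -> R) : R := psum n (fun k => g (Z.of_nat k)).

Lemma sumZ_shift n (h : Z -> R) :
  sumZ n (fun u => h (u + 1)%Z) = sumZ n h + h (Z.of_nat n) - h 0%Z.
Proof.
  unfold sumZ; induction n as [|n IH]; cbn [psum]; [cbn; ring|].
  rewrite IH, Nat2Z.inj_succ, <- Z.add_1_r. ring.
Qed.

Definition nbr_avg (h : Z -> R) (u : Z) : R := (h (u - 1)%Z + h (u + 1)%Z) / 2.

Lemma nbr_avg_sumZ n (G : Z -> Z -> R) u :
  nbr_avg (fun u' => sumZ n (G u')) u = sumZ n (fun v => nbr_avg (fun u' => G u' v) u).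
Proof.
  unfold nbr_avg, sumZ. rewrite <- psum_add. unfold Rdiv.
  rewrite Rmult_comm, <- psum_scal. apply psum_ext; intros; field.
Qed.

Lemma sumZ_nbr_avg_sym n (h g : Z -> R) :
  h (-1)%Z = 0 -> h 0%Z = 0 -> h (Z.of_nat n - 1)%Z = 0 -> h (Z.of_nat n) = 0 ->
  sumZ n (fun u => nbr_avg h u * g u) = sumZ n (fun u => h u * nbr_avg g u).
Proof.
  intros Hm1 H0 Hn1 Hn.
  pose proof (sumZ_shift n (fun w => h w * g (w - 1)%Z)) as Sup.
  pose proof (sumZ_shift n (fun w => h (w - 1)%Z * g w)) as Sdown.
  cbn beta in Sup, Sdown. change (0 - 1)%Z with (-1)%Z in Sdown.
  rewrite H0, Hn in Sup. rewrite Hn1, Hm1 in Sdown.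
  unfold sumZ in *.
  rewrite (psum_ext n _ (fun k => / 2 * (h (Z.of_nat k - 1)%Z * g (Z.of_nat k))
                                 + / 2 * (h (Z.of_nat k + 1)%Z * g (Z.of_nat k))))
    by (intros; unfold nbr_avg; field).
  rewrite (psum_ext n (fun k => h (Z.of_nat k) * nbr_avg g (Z.of_nat k))
             (fun k => / 2 * (h (Z.of_nat k) * g (Z.of_nat k - 1)%Z)
                       + / 2 * (h (Z.of_nat k + 1 - 1)%Z * g (Z.of_nat k + 1)%Z)))
    by (intros; unfold nbr_avg; replace (Z.of_nat k + 1 - 1)%Z with (Z.of_nat k) by lia; field).
  rewrite !psum_add, !psum_scal, Sdown.
  rewrite (psum_ext n (fun k => h (Z.of_nat k + 1)%Z * g (Z.of_nat k))
             (fun k => h (Z.of_nat k + 1)%Z * g (Z.of_nat k + 1 - 1)%Z))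
    by (intros; do 2 f_equal; lia).
  rewrite Sup. ring.
Qed.

Fixpoint walk (t : nat) (u : Z) : R :=
  match t with
  | O => if Z.eq_dec u 1 then 1 else 0
  | S t => if Z_lt_dec 0 u then nbr_avg (walk t) u else 0
  end.

Lemma walk_ge0 t u : 0 <= walk t u.
Proof.
  revert u; induction t as [|t IH]; intros u; cbn.
  - destruct Z.eq_dec; lra.
  - destruct Z_lt_dec; [|lra]. unfold nbr_avg.
    pose proof (IH (u - 1)%Z); pose proof (IH (u + 1)%Z); lra.
Qed.

Lemma walk_neq0 t u :
  walk t u <> 0 -> (1 <= u <= Z.of_nat t + 1)%Z /\ exists k, (u + Z.of_nat t = 2 * k + 1)%Z.
Proof.
  revert u; induction t as [|t IH]; intros u Hu; cbn in Hu.
  - destruct Z.eq_dec as [->|]; [split; [lia|now exists 0%Z]|lra].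
  - destruct Z_lt_dec; [|lra]. unfold nbr_avg in Hu. rewrite Nat2Z.inj_succ.
    destruct (Req_dec (walk t (u - 1)) 0) as [E|E].
    + assert (E' : walk t (u + 1) <> 0) by (rewrite E in Hu; lra).
      destruct (IH _ E') as [? [k ?]]. split; [lia|]. exists k; lia.
    + destruct (IH _ E) as [? [k ?]]. split; [lia|]. exists (k + 1)%Z; lia.
Qed.

Lemma walk_eq0 t u : (u <= 0 \/ Z.of_nat t + 1 < u)%Z -> walk t u = 0.
Proof.
  intros Hu. destruct (Req_dec (walk t u) 0) as [E|E]; [exact E|].
  apply walk_neq0 in E; lia.
Qed.

Lemma walk_S_le t u : walk (S t) u <= nbr_avg (walk t) u.
Proof.
  cbn. destruct Z_lt_dec; [lra|]. unfold nbr_avg.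
  pose proof (walk_ge0 t (u - 1)); pose proof (walk_ge0 t (u + 1)); lra.
Qed.

Lemma walk_S_mul t u (g : Z -> R) :
  g 0%Z = 0 -> walk (S t) u * g u = nbr_avg (walk t) u * g u.
Proof.
  intros Hg. cbn. destruct Z_lt_dec; [reflexivity|].
  destruct (Z.eq_dec u 0) as [->|Hu]; [rewrite Hg; ring|].
  unfold nbr_avg. rewrite !walk_eq0 by lia. field.
Qed.

Section Window.
Variable N : nat.

Lemma walk_step_eq t g : (t + 3 <= N)%nat -> g 0%Z = 0 ->
  sumZ N (fun u => walk (S t) u * g u) = sumZ N (fun u => walk t u * nbr_avg g u).
Proof.
  intros HN Hg. unfold sumZ at 1.
  rewrite (psum_ext N _ (fun k => nbr_avg (walk t) (Z.of_nat k) * g (Z.of_nat k)))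
    by (intros; now apply walk_S_mul).
  apply sumZ_nbr_avg_sym; apply walk_eq0; lia.
Qed.

Lemma walk_step_le t g : (t + 3 <= N)%nat -> (forall u, 0 <= g u) ->
  sumZ N (fun u => walk (S t) u * g u) <= sumZ N (fun u => walk t u * nbr_avg g u).
Proof.
  intros HN Hg. rewrite <- sumZ_nbr_avg_sym by (apply walk_eq0; lia).
  apply psum_le; intros k. apply Rmult_le_compat_r; [apply Hg|apply walk_S_le].
Qed.

Lemma walk_0_sum g : (2 <= N)%nat -> sumZ N (fun u => walk 0 u * g u) = g 1%Z.
Proof.
  intros HN. unfold sumZ. rewrite (psum_single N _ 1); [cbn; ring|lia|].
  intros k Hk. cbn. destruct Z.eq_dec; [lia|ring].
Qed.

Definition mass t := sumZ N (walk t).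
Definition moment1 t := sumZ N (fun u => walk t u * IZR u).
Definition moment2 t := sumZ N (fun u => walk t u * IZR u ^ 2).

Lemma moment1_eq1 t : (t + 2 <= N)%nat -> moment1 t = 1.
Proof.
  induction t as [|t IH]; intros HN; unfold moment1.
  - rewrite walk_0_sum by lia. reflexivity.
  - rewrite walk_step_eq; [|lia|reflexivity]. rewrite <- IH by lia.
    apply psum_ext; intros k. unfold nbr_avg. rewrite minus_IZR, plus_IZR. field.
Qed.

Lemma moment2_0 : (2 <= N)%nat -> moment2 0 = 1.
Proof. intros HN. unfold moment2. rewrite walk_0_sum by lia. cbn; ring. Qed.

Lemma moment2_S t : (t + 3 <= N)%nat -> moment2 (S t) = moment2 t + mass t.
Proof.
  intros HN. unfold moment2, mass, sumZ at 3.
  rewrite walk_step_eq; [|lia|cbn; ring]. unfold sumZ. rewrite <- psum_add.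
  apply psum_ext; intros k. unfold nbr_avg. rewrite minus_IZR, plus_IZR. field.
Qed.

Lemma mass_moment2_ge1 t : (t + 2 <= N)%nat -> 1 <= mass t * moment2 t.
Proof.
  intros HN. pose proof (psum_cauchy_schwarz N (fun k => walk t (Z.of_nat k))
    (fun k => IZR (Z.of_nat k)) (fun k => walk_ge0 t _)) as CS.
  change (moment1 t ^ 2 <= mass t * moment2 t) in CS.
  rewrite moment1_eq1 in CS by assumption. lra.
Qed.

End Window.

Section Growth.
Variables (m s : nat -> R) (T : nat).
Hypothesis m_0 : m 0%nat = 1.
Hypothesis m_S : forall t, (t < T)%nat -> m (S t) = m t + s t.
Hypothesis s_m_ge1 : forall t, (t < T)%nat -> 1 <= s t * m t.

Lemma growth_ge1 t : (t <= T)%nat -> 1 <= m t.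
Proof.
  induction t as [|t IH]; intros Ht; [lra|].
  specialize (IH ltac:(lia)). pose proof (s_m_ge1 t ltac:(lia)).
  rewrite m_S by lia. nra.
Qed.

Lemma growth_sq t : (t <= T)%nat -> 1 + 2 * INR t <= m t ^ 2.
Proof.
  induction t as [|t IH]; intros Ht; [rewrite m_0; cbn; lra|].
  specialize (IH ltac:(lia)). pose proof (s_m_ge1 t ltac:(lia)).
  rewrite m_S, S_INR by lia. nra.
Qed.

Lemma growth_le_exp t : (t <= T)%nat -> m t <= exp (psum t (fun r => s r ^ 2)).
Proof.
  induction t as [|t IH]; intros Ht; [rewrite m_0; cbn; rewrite exp_0; lra|].
  specialize (IH ltac:(lia)). pose proof (s_m_ge1 t ltac:(lia)).
  pose proof (growth_ge1 t ltac:(lia)). pose proof (exp_ineq1_le (s t ^ 2)).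
  rewrite m_S by lia. cbn [psum]. rewrite exp_plus.
  assert (Hs : s t <= m t * s t ^ 2) by nra.
  assert (m t * (1 + s t ^ 2) <= exp (psum t (fun r => s r ^ 2)) * exp (s t ^ 2))
    by (apply Rmult_le_compat; nra).
  nra.
Qed.

Lemma growth_sq_le_exp : 1 + 2 * INR T <= exp (psum T (fun r => s r ^ 2)) ^ 2.
Proof.
  pose proof (growth_sq T (le_n T)). pose proof (growth_le_exp T (le_n T)).
  pose proof (growth_ge1 T (le_n T)). nra.
Qed.

End Growth.

(* [f] read in the coordinates (u, v) = (x + y, x - y); only meaningful when u and v have the
   same parity, which holds on the support of a pair [walk t u], [walk t v]. *)
Definition rot (f : Z -> Z -> R) (u v : Z) : R := f ((u + v) / 2)%Z ((u - v) / 2)%Z.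

Lemma rot_at f u v x y : u = (x + y)%Z -> v = (x - y)%Z -> rot f u v = f x y.
Proof.
  intros -> ->. unfold rot.
  replace (x + y + (x - y))%Z with (x * 2)%Z by lia.
  replace (x + y - (x - y))%Z with (y * 2)%Z by lia.
  now rewrite !Z.div_mul by lia.
Qed.

Lemma walk_pair_in_cone t u v : walk t u <> 0 -> walk t v <> 0 ->
  exists x y, u = (x + y)%Z /\ v = (x - y)%Z /\ (0 <= x)%Z /\ (Z.abs y <= x)%Z.
Proof.
  intros Hu Hv.
  destruct (walk_neq0 t u Hu) as [? [k ?]], (walk_neq0 t v Hv) as [? [j ?]].
  exists (k + j + 1 - Z.of_nat t)%Z, (k - j)%Z. lia.
Qed.

Section Energy.
Variables (f : Z -> Z -> R) (alpha : R) (N : nat).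
Hypothesis f_ge0 : forall x y, 0 <= f x y.
Hypothesis f_stable : forall x y, (1 + alpha) * indC1 x y + laplacian f x y <= 1.

Lemma cone_superharmonic x y : (0 <= x)%Z -> (Z.abs y <= x)%Z ->
  f (x + 1)%Z y + f (x - 1)%Z y + f x (y + 1)%Z + f x (y - 1)%Z <= 4 * f x y - alpha.
Proof.
  intros Hx Hy. pose proof (f_stable x y) as H. unfold indC1, laplacian in H.
  destruct (Z_le_dec 0 x); [|lia]. destruct (Z_le_dec (Z.abs y) x); [lra|lia].
Qed.

Lemma walk_pair_superharmonic t u v :
  walk t u * walk t v * nbr_avg (fun u' => nbr_avg (rot f u') v) u
  <= walk t u * walk t v * (rot f u v - alpha / 4).
Proof.
  destruct (Req_dec (walk t u) 0) as [Hu|Hu]; [rewrite Hu; lra|].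
  destruct (Req_dec (walk t v) 0) as [Hv|Hv]; [rewrite Hv; lra|].
  destruct (walk_pair_in_cone t u v Hu Hv) as [x [y [-> [-> [Hx Hy]]]]].
  apply Rmult_le_compat_l; [apply Rmult_le_pos; apply walk_ge0|].
  unfold nbr_avg.
  rewrite (rot_at f (x + y) (x - y) x y),
    (rot_at f (x + y - 1) (x - y - 1) (x - 1) y),
    (rot_at f (x + y - 1) (x - y + 1) x (y - 1)),
    (rot_at f (x + y + 1) (x - y - 1) x (y + 1)),
    (rot_at f (x + y + 1) (x - y + 1) (x + 1) y) by lia.
  pose proof (cone_superharmonic x y Hx Hy). lra.
Qed.

Definition energy t :=
  sumZ N (fun u => walk t u * sumZ N (fun v => walk t v * rot f u v)).

Lemma energy_ge0 t : 0 <= energy t.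
Proof.
  apply psum_ge0; intros k. apply Rmult_le_pos; [apply walk_ge0|].
  apply psum_ge0; intros j. apply Rmult_le_pos; [apply walk_ge0|apply f_ge0].
Qed.

Lemma energy_0 : (2 <= N)%nat -> energy 0 = f 1%Z 0%Z.
Proof.
  intros HN. unfold energy. rewrite !walk_0_sum by assumption. now apply rot_at.
Qed.

Lemma energy_step t : (t + 3 <= N)%nat ->
  energy (S t) <= energy t - alpha / 4 * mass N t ^ 2.
Proof.
  intros HN. unfold energy.
  set (inner u := sumZ N (fun v => walk t v * nbr_avg (rot f u) v)).
  assert (rot_ge0 : forall u v, 0 <= rot f u v) by (intros; apply f_ge0).
  assert (inner_ge0 : forall u, 0 <= inner u).
  { intros u. apply psum_ge0; intros j. apply Rmult_le_pos; [apply walk_ge0|].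
    unfold nbr_avg. pose proof (rot_ge0 u (Z.of_nat j - 1)%Z).
    pose proof (rot_ge0 u (Z.of_nat j + 1)%Z). lra. }
  apply Rle_trans with (sumZ N (fun u => walk (S t) u * inner u)).
  { apply psum_le; intros k. apply Rmult_le_compat_l; [apply walk_ge0|].
    apply walk_step_le; [assumption|apply rot_ge0]. }
  eapply Rle_trans; [apply walk_step_le; assumption|].
  apply Rle_trans with
    (sumZ N (fun u => walk t u * sumZ N (fun v => walk t v * (rot f u v - alpha / 4)))).
  { apply psum_le; intros k. unfold inner. rewrite nbr_avg_sumZ. unfold sumZ.
    rewrite <- !psum_scal. apply psum_le; intros j.
    pose proof (walk_pair_superharmonic t (Z.of_nat k) (Z.of_nat j)).
    unfold nbr_avg in *. lra. }
  right. unfold mass, sumZ. set (M := psum N (fun k => walk t (Z.of_nat k))).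
  assert (Inner : forall u,
            psum N (fun j => walk t (Z.of_nat j) * (rot f u (Z.of_nat j) - alpha / 4))
            = psum N (fun j => walk t (Z.of_nat j) * rot f u (Z.of_nat j)) - alpha / 4 * M).
  { intros u. rewrite (psum_ext N _ (fun j => walk t (Z.of_nat j) * rot f u (Z.of_nat j)
                                     + - (alpha / 4) * walk t (Z.of_nat j))) by (intros; ring).
    rewrite psum_add, psum_scal. unfold M. ring. }
  rewrite (psum_ext N _ (fun k => walk t (Z.of_nat k) *
             psum N (fun j => walk t (Z.of_nat j) * rot f (Z.of_nat k) (Z.of_nat j))
             + - (alpha / 4 * M) * walk t (Z.of_nat k))) by (intros k; rewrite Inner; ring).
  rewrite psum_add, psum_scal. fold M. ring.
Qed.

Lemma energy_sum_mass_sq t : (t + 2 <= N)%nat ->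
  alpha / 4 * psum t (fun r => mass N r ^ 2) <= f 1%Z 0%Z.
Proof.
  intros HN.
  enough (energy t + alpha / 4 * psum t (fun r => mass N r ^ 2) <= f 1%Z 0%Z)
    by (pose proof (energy_ge0 t); lra).
  induction t as [|t IH].
  - rewrite energy_0 by lia. cbn. lra.
  - pose proof (energy_step t ltac:(lia)). specialize (IH ltac:(lia)). cbn [psum]. lra.
Qed.

End Energy.

Theorem lemma6p1 (alpha : R) (halpha : 0 < alpha) :
  ~ stabilizes (fun x y => (1 + alpha) * indC1 x y).
Proof.
  intros [f [f_ge0 f_stable]].
  set (B := 4 * f 1%Z 0%Z / alpha).
  destruct (INR_archimed 1 (exp B ^ 2)) as [T HT]; [lra|].
  set (N := (T + 3)%nat).
  assert (Hsum : psum T (fun r => mass N r ^ 2) <= B).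
  { pose proof (energy_sum_mass_sq f alpha N f_ge0 f_stable T ltac:(lia)).
    unfold B. apply (Rmult_le_reg_l (alpha / 4)); [lra|]. field_simplify; lra. }
  assert (Hexp : exp (psum T (fun r => mass N r ^ 2)) <= exp B).
  { destruct Hsum as [Hlt|Heq]; [left; now apply exp_increasing|now rewrite Heq; right]. }
  pose proof (growth_sq_le_exp (moment2 N) (mass N) T (moment2_0 N ltac:(lia))
    (fun t Ht => moment2_S N t ltac:(lia))
    (fun t Ht => mass_moment2_ge1 N t ltac:(lia))) as Hgrowth.
  pose proof (exp_pos (psum T (fun r => mass N r ^ 2))). pose proof (pos_INR T).
  nra.
Qed.
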